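(* There is a constant $c$ such that the following holds. Let $L\subseteq\{a\}^*$ be a unary star-free language accepted by an NFA with $n$ states. Then there is a number $N\leq c\,n^2$ such that $a^N\in L$ if and only if $a^{N+k}\in L$ for all $k\in\mathbb{N}_{\geq 0}$.
   Context: Star-free languages are those obtained from finite languages by finitely many applications of union, concatenation and complement (in $\{a\}^*$). NFAs have one initial state and no $\varepsilon$-transitions. *)

From mathcomp Require Import all_boot.
Set Implicit Arguments. Unset Strict Implicit. Unset Printing Implicit Defensive.

(* The unary alphabet {a} is modelled by [unit] (a = tt); words are [seq unit],
   so a^k is [nseq k tt]. A language is a predicate on words. *)
Definition word := seq unit.
Definition lang := word -> Prop.

Definition lang_union (L1 L2 : lang) : lang := fun w => L1 w \/ L2 w.
Definition lang_cat (L1 L2 : lang) : lang :=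
  fun w => exists u v, w = u ++ v /\ L1 u /\ L2 v.
Definition lang_compl (L : lang) : lang := fun w => ~ L w.
Definition lang_fin (s : seq word) : lang := fun w => w \in s.

Inductive star_free : lang -> Prop :=
| sf_fin (s : seq word) : star_free (lang_fin s)
| sf_union L1 L2 : star_free L1 -> star_free L2 -> star_free (lang_union L1 L2)
| sf_cat L1 L2 : star_free L1 -> star_free L2 -> star_free (lang_cat L1 L2)
| sf_compl L : star_free L -> star_free (lang_compl L).

Record nfa (n : nat) := NFA {
  init : 'I_n;
  delta : rel 'I_n;
  final : pred 'I_n
}.

Definition nfa_accepts n (A : nfa n) (w : word) : Prop :=
  exists p : seq 'I_n,
    size p = size w /\ path (delta A) (init A) p /\ final A (last (init A) p).

Definition accepts_lang n (A : nfa n) (L : lang) : Prop :=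
  forall w, nfa_accepts A w <-> L w.

(* A star-free unary language is finite or cofinite, hence constant on all
   long enough words.  If an NFA with n states accepts a^m with m >= n, the
   accepting run closes a cycle of some length e <= n within its first n
   steps, and pigeonholing on (state, position mod e) shortens the rest of the
   run by multiples of e to length below n e.  Hence every a^l with
   l >= n + n^2 and l = m (mod e) is accepted.  As e divides n!, acceptance of
   a^l for l >= n + n^2 is invariant under adding multiples of n!, so the
   language is constant from N = n + n^2 <= 2 n^2 on. *)

From Stdlib Require Import Classical.
From mathcomp Require Import all_boot zify.
Set Implicit Arguments. Unset Strict Implicit. Unset Printing Implicit Defensive.

Section Walks.

Variables (n : nat) (A : nfa n).

Definition walk (p q : 'I_n) (m : nat) : Prop :=
  exists ps : seq 'I_n, [/\ size ps = m, path (delta A) p ps & last p ps = q].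

Lemma walk_cat p q r a b : walk p q a -> walk q r b -> walk p r (a + b).
Proof.
move=> [ps [<- pps <-]] [qs [<- qqs <-]]; exists (ps ++ qs).
by rewrite size_cat cat_path last_cat pps qqs.
Qed.

Lemma walk_iter p e t : walk p p e -> walk p p (t * e).
Proof.
move=> Wp; elim: t => [|t IH]; first by exists [::].
by rewrite mulSn; apply: walk_cat Wp IH.
Qed.

Lemma walk_take p ps i j : path (delta A) p ps -> i <= j <= size ps ->
  walk (last p (take i ps)) (last p (take j ps)) (j - i).
Proof.
move=> pps /andP[ij j_le]; exists (take (j - i) (drop i ps)); split.
- by rewrite size_takel // size_drop; lia.
- apply: take_path.
  by move: pps; rewrite -{1}(cat_take_drop i ps) cat_path => /andP[].
- by rewrite -last_cat -takeD subnKC.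
Qed.

Lemma walk_cycle p q a d : walk p q a -> 0 < d -> n * d <= a ->
  exists r i j, [/\ i < j <= n * d, d %| j - i,
                    walk p r i, walk r r (j - i) & walk r q (a - j)].
Proof.
move=> [ps [<- pps <-]] d_gt0 nd_le.
pose f (k : 'I_(n * d).+1) := (last p (take k ps), Ordinal (ltn_pmod k d_gt0)).
have [x [y [xy fxy]]] : exists x y : 'I_(n * d).+1, x < y /\ f x = f y.
  have /injectivePn[x [y xy fxy]] : ~~ injectiveb f.
    by apply/injectiveP => /leq_card; rewrite card_prod !card_ord; lia.
  case: (ltngtP x y) => [lt | gt | /val_inj eq]; first by exists x, y.
    by exists y, x.
  by move: xy; rewrite eq eqxx.
case: fxy => r_eq mod_eq.
have y_le : y <= size ps by have := ltn_ord y; lia.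
exists (last p (take y ps)), x, y; split.
- by rewrite xy -ltnS ltn_ord.
- by rewrite -eqn_mod_dvd ?mod_eq // ltnW.
- rewrite -r_eq; have := walk_take (i := 0) (j := x) pps.
  by rewrite take0 subn0; apply; lia.
- by rewrite -{1}r_eq; apply: walk_take pps _; rewrite (ltnW xy) y_le.
- by rewrite -{2}(take_size ps); apply: walk_take pps _; rewrite y_le leqnn.
Qed.

Lemma walk_mod r q e a : 0 < e -> walk r q a ->
  exists a0 t, [/\ a0 < n * e, a = a0 + t * e & walk r q a0].
Proof.
move=> e_gt0; elim/ltn_ind: a => a IH Wa.
have [a_lt | a_ge] := ltnP a (n * e); first by exists a, 0; rewrite addn0.
have [s [i [j [/andP[ij j_le] /dvdnP[k jik] Wi _ Wj]]]] := walk_cycle Wa e_gt0 a_ge.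
have [|a0 [t [a0_lt a_eq Wa0]]] := IH (i + (a - j)) _ (walk_cat Wi Wj); first lia.
by exists a0, (t + k); split => //; lia.
Qed.

Lemma nfa_accepts_nseq m :
  nfa_accepts A (nseq m tt) <-> exists2 q, final A q & walk (init A) q m.
Proof.
split=> [[ps [sz [pps qF]]] | [q qF [ps [sz pps ps_q]]]].
  by exists (last (init A) ps) => //; exists ps; rewrite sz size_nseq.
by exists ps; rewrite size_nseq ps_q.
Qed.

Lemma nfa_accepts_nseq_mod m : n <= m -> nfa_accepts A (nseq m tt) ->
  exists2 e, 0 < e <= n & forall l, n + n * n <= l -> l = m %[mod e] ->
    nfa_accepts A (nseq l tt).
Proof.
move=> m_ge /nfa_accepts_nseq[q qF Wm].
have [|r [i [j [/andP[ij j_le] _ Wi Wc Wj]]]] := walk_cycle Wm (ltn0Sn 0); first lia.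
set e := j - i in Wc; have e_gt0 : 0 < e by rewrite subn_gt0.
have [a0 [t [a0_lt a_eq Wa0]]] := walk_mod e_gt0 (walk_cat Wc Wj).
exists e; first lia.
move=> l l_ge l_mod; apply/nfa_accepts_nseq; exists q => //.
have a0_le : a0 < n * n by apply: (leq_trans a0_lt); apply: leq_mul => //; lia.
have /dvdnP[s l_eq] : e %| l - (i + a0).
  rewrite -eqn_mod_dvd; last lia.
  by rewrite l_mod (_ : m = t * e + (i + a0)) ?modnMDl //; lia.
rewrite (_ : l = i + (s * e + a0)); last lia.
exact: walk_cat Wi (walk_cat (walk_iter s Wc) Wa0).
Qed.

Lemma nfa_accepts_nseq_shift l t : n + n * n <= l ->
  nfa_accepts A (nseq l tt) <-> nfa_accepts A (nseq (l + t * n`!) tt).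
Proof.
move=> l_ge.
have shift_mod e m : 0 < e <= n -> m + t * n`! = m %[mod e].
  by move=> /dvdn_fact/dvdnP[f ->]; rewrite mulnA addnC modnMDl.
split=> acc.
  have [|e e_le acc_mod] := nfa_accepts_nseq_mod _ acc; first lia.
  by apply: acc_mod; [lia | exact: shift_mod].
have [|e e_le acc_mod] := nfa_accepts_nseq_mod _ acc; first lia.
by apply: acc_mod => //; rewrite shift_mod.
Qed.

End Walks.

Definition ultimately_const (L : lang) : Prop :=
  exists M (b : bool), forall m, M <= m -> L (nseq m tt) <-> b.

Lemma word_nseq (w : word) : w = nseq (size w) tt.
Proof. by elim: w => [|[] w IH] //=; rewrite -IH. Qed.

Lemma lang_cat_nseq L1 L2 m : lang_cat L1 L2 (nseq m tt) <->
  exists i j, [/\ m = i + j, L1 (nseq i tt) & L2 (nseq j tt)].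
Proof.
split=> [[u [v [uv [L1u L2v]]]] | [i [j [-> L1i L2j]]]].
  exists (size u), (size v); rewrite -!word_nseq; split => //.
  by rewrite -size_cat -uv size_nseq.
by exists (nseq i tt), (nseq j tt); rewrite nseqD.
Qed.

Lemma ultimately_const_fin s : ultimately_const (lang_fin s).
Proof.
exists (\max_(w <- s) size w).+1, false => m m_gt; split => // ms.
have := leq_bigmax_seq (F := size) (P := xpredT) _ ms isT.
by rewrite size_nseq => /leq_ltn_trans/(_ m_gt); rewrite ltnn.
Qed.

Lemma ultimately_const_union L1 L2 :
  ultimately_const L1 -> ultimately_const L2 -> ultimately_const (lang_union L1 L2).
Proof.
move=> [M1 [b1 L1M]] [M2 [b2 L2M]].
exists (maxn M1 M2), (b1 || b2) => m m_ge.
by rewrite /lang_union (L1M m) ?(L2M m); lia.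
Qed.

Lemma ultimately_const_compl L :
  ultimately_const L -> ultimately_const (lang_compl L).
Proof.
move=> [M [b LM]]; exists M, (~~ b) => m m_ge.
by rewrite /lang_compl LM //; case: b {LM}; intuition.
Qed.

Lemma ultimately_const_cat L1 L2 :
  ultimately_const L1 -> ultimately_const L2 -> ultimately_const (lang_cat L1 L2).
Proof.
move=> [M1 [b1 L1M]] [M2 [b2 L2M]].
have [[i1 L1i1] | L1_empty] := classic (exists i, L1 (nseq i tt)); last first.
  exists 0, false => m _; split=> // /lang_cat_nseq[i [_ [_ L1i _]]].
  by case: L1_empty; exists i.
have [[j2 L2j2] | L2_empty] := classic (exists j, L2 (nseq j tt)); last first.
  exists 0, false => m _; split=> // /lang_cat_nseq[_ [j [_ _ L2j]]].
  by case: L2_empty; exists j.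
case: b1 L1M => L1M.
  exists (M1 + j2), true => m m_ge; split=> // _; apply/lang_cat_nseq.
  by exists (m - j2), j2; split => //; [lia | apply/L1M; lia].
case: b2 L2M => L2M.
  exists (i1 + M2), true => m m_ge; split=> // _; apply/lang_cat_nseq.
  by exists i1, (m - i1); split => //; [lia | apply/L2M; lia].
exists (M1 + M2), false => m m_ge; split=> // /lang_cat_nseq[i [j [m_eq L1i L2j]]].
have [i_ge | i_lt] := leqP M1 i; first by apply/(L1M i).
by apply/(L2M j) => //; lia.
Qed.

Lemma star_free_ultimately_const L : star_free L -> ultimately_const L.
Proof.
elim=> {L} [s | L1 L2 _ + _ | L1 L2 _ + _ | L _].
- exact: ultimately_const_fin.
- exact: ultimately_const_union.
- exact: ultimately_const_cat.
- exact: ultimately_const_compl.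
Qed.

Theorem lemma20 :
  exists c : nat, forall (L : lang) (n : nat) (A : nfa n),
    star_free L -> accepts_lang A L ->
    exists N : nat, N <= c * n ^ 2 /\
      (forall k : nat, L (nseq N tt) <-> L (nseq (N + k) tt)).
Proof.
exists 2 => L n A /star_free_ultimately_const[M [b LM]] AL.
have L_const l : n + n * n <= l -> L (nseq l tt) <-> b.
  move=> l_ge; rewrite -(LM (l + M * n`!)); last by have := fact_gt0 n; nia.
  by rewrite -!AL -nfa_accepts_nseq_shift.
exists (n + n * n); split; first by nia.
by move=> k; rewrite (L_const (n + n * n)) // (L_const (n + n * n + k)) //; lia.
Qed.
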